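(* There is an $\mathrm{FP}$-formula $\varphi_{1}(x,y,y')$ over the vocabulary $\{E\}$ such that for all prime permutation graphs $G=(V,E)$ and all $w,v,v'\in V$: $G\models\varphi_{1}[w,v,v']$ iff $v\vartriangleleft_1^w v'$; and for any such formula, $\varphi(x,y,y'):=\varphi_{1}(x,y,y')\lor y=y'$ defines orders on the class of prime permutation graphs, i.e., for every prime permutation graph $G$ there is $w\in V$ such that $\{(v,v')\mid G\models\varphi[w,v,v']\}$ is a linear order on $V$.
   Context: Graphs are finite, simple, undirected, with nonempty vertex set. A module of $G$ is a nonempty $M\subseteq V$ such that every vertex outside $M$ is adjacent to all or none of $M$; $G$ is prime if its only modules are $V$ and the singletons. A realizer of $G$ is a pair $(<_1,<_2)$ of strict linear orders on $V$ such that distinct $u,v$ are adjacent iff they appear in different orders in $<_1$ and $<_2$; $G$ is a permutation graph if it has a realizer. For a pair of binary relations $(\lhd_1,\lhd_2)$ on $V$: its transitive closure is $(\lhd_1^T,\lhd_2^T)$ (componentwise); its closure under $E$ is $(\lhd_1^E,\lhd_2^E)$ where, for $i\in[2]$, $\lhd_i^E=\lhd_i\cup\{(v,u)\mid u\lhd_{3-i}v,\ \{u,v\}\in E\}\cup\{(u,v)\mid u\lhd_{3-i}v,\ \{u,v\}\notin E\}$. For $w\in V$ define $\lhd_{1,0}^w=\{(w,v)\mid v\ne w\}$, $\lhd_{2,0}^w=\emptyset$, and for $k\ge0$, $(\lhd_{1,k+1}^w,\lhd_{2,k+1}^w)=((\lhd_{1,k}^w,\lhd_{2,k}^w)^E)^T$;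 $\lhd_i^w$ is the stabilized value. $\mathrm{FP}$ is (inflationary) fixed-point logic, i.e., first-order logic extended with inflationary fixed-point operators. *)

From mathcomp Require Import all_boot.
From Stdlib Require Import Relations.
Set Implicit Arguments. Unset Strict Implicit. Unset Printing Implicit Defensive.

Definition simple_graph (V : finType) (E : rel V) : Prop :=
  (exists v : V, True) /\ (forall u v, E u v = E v u) /\ (forall v, ~~ E v v).

Definition is_module (V : finType) (E : rel V) (M : {set V}) : Prop :=
  M != set0 /\
  forall x, x \notin M -> (forall m, m \in M -> E x m) \/ (forall m, m \in M -> ~~ E x m).

Definition prime_graph (V : finType) (E : rel V) : Prop :=
  forall M : {set V}, is_module E M -> M = [set: V] \/ #|M| = 1.

Definition strict_linear_order (V : Type) (lt : V -> V -> Prop) : Prop :=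
  (forall x, ~ lt x x) /\
  (forall x y z, lt x y -> lt y z -> lt x z) /\
  (forall x y, x <> y -> lt x y \/ lt y x).

Definition realizer (V : finType) (E : rel V) (lt1 lt2 : V -> V -> Prop) : Prop :=
  strict_linear_order lt1 /\ strict_linear_order lt2 /\
  forall u v, u <> v ->
    (E u v <-> ((lt1 u v /\ lt2 v u) \/ (lt1 v u /\ lt2 u v))).

Definition permutation_graph (V : finType) (E : rel V) : Prop :=
  exists lt1 lt2, realizer E lt1 lt2.

Definition linear_order (V : Type) (le : V -> V -> Prop) : Prop :=
  (forall x, le x x) /\
  (forall x y, le x y -> le y x -> x = y) /\
  (forall x y z, le x y -> le y z -> le x z) /\
  (forall x y, le x y \/ le y x).

Definition relpair (V : Type) := ((V -> V -> Prop) * (V -> V -> Prop))%type.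

Definition closE_comp (V : finType) (E : rel V) (li lo : V -> V -> Prop) : V -> V -> Prop :=
  fun a b => li a b \/ (lo b a /\ E b a) \/ (lo a b /\ ~~ E a b).

Definition closE (V : finType) (E : rel V) (p : relpair V) : relpair V :=
  (closE_comp E p.1 p.2, closE_comp E p.2 p.1).

Definition closT (V : Type) (p : relpair V) : relpair V :=
  (clos_trans V p.1, clos_trans V p.2).

Definition lhd0 (V : finType) (w : V) : relpair V :=
  (fun a b => a = w /\ b <> w, fun _ _ => False).

Definition lhd_k (V : finType) (E : rel V) (w : V) (k : nat) : relpair V :=
  iter k (fun p => closT (closE E p)) (lhd0 w).

(* stabilized value of the increasing sequence = its union *)
Definition lhd1 (V : finType) (E : rel V) (w : V) : V -> V -> Prop :=
  fun a b => exists k, (lhd_k E w k).1 a b.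

Inductive formula : Type :=
| FEdge of nat & nat
| FEq of nat & nat
| FRel of nat & seq nat
| FNot of formula
| FAnd of formula & formula
| FOr of formula & formula
| FExists of nat & formula
| FForall of nat & formula
| FIfp of nat & seq nat & formula & seq nat.
    (* FIfp X xs phi ts  =  [ifp_{X, xs} phi](ts) *)

Fixpoint fo_free (f : formula) : seq nat :=
  match f with
  | FEdge x y | FEq x y => [:: x; y]
  | FRel _ ts => ts
  | FNot g => fo_free g
  | FAnd g h | FOr g h => fo_free g ++ fo_free h
  | FExists x g | FForall x g => [seq i <- fo_free g | i != x]
  | FIfp _ xs g ts => ts ++ [seq i <- fo_free g | i \notin xs]
  end.

Fixpoint rel_free (f : formula) : seq nat :=
  match f with
  | FEdge _ _ | FEq _ _ => [::]
  | FRel r _ => [:: r]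
  | FNot g => rel_free g
  | FAnd g h | FOr g h => rel_free g ++ rel_free h
  | FExists _ g | FForall _ g => rel_free g
  | FIfp r _ g _ => [seq j <- rel_free g | j != r]
  end.

Definition upd (V : Type) (va : nat -> V) (x : nat) (a : V) : nat -> V :=
  fun i => if i == x then a else va i.

Definition upd_list (V : Type) (va : nat -> V) (xs : seq nat) (t : seq V) : nat -> V :=
  fun i => if i \in xs then nth (va i) t (index i xs) else va i.

Definition upd_rel (V : Type) (ra : nat -> seq V -> Prop) (r : nat) (S : seq V -> Prop)
  : nat -> seq V -> Prop :=
  fun j => if j == r then S else ra j.

Fixpoint sem (V : finType) (E : rel V) (f : formula)
  (va : nat -> V) (ra : nat -> seq V -> Prop) {struct f} : Prop :=
  match f with
  | FEdge x y => E (va x) (va y)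
  | FEq x y => va x = va y
  | FRel r ts => ra r (map va ts)
  | FNot g => ~ sem E g va ra
  | FAnd g h => sem E g va ra /\ sem E h va ra
  | FOr g h => sem E g va ra \/ sem E h va ra
  | FExists x g => exists a : V, sem E g (upd va x a) ra
  | FForall x g => forall a : V, sem E g (upd va x a) ra
  | FIfp r xs g ts =>
      let fix stage (n : nat) : seq V -> Prop :=
        match n with
        | 0 => fun _ => False
        | n'.+1 => fun t => stage n' t \/
            (size t = size xs /\ sem E g (upd_list va xs t) (upd_rel ra r (stage n')))
        end in
      exists n, stage n (map va ts)
  end.

(* phi has free first-order variables among {0,1,2} (= x, y, y')
   and no free relation variables (vocabulary {E}) *)
Definition formula_xyy' (f : formula) : Prop :=
  all (fun i => i \in [:: 0; 1; 2]) (fo_free f) /\ rel_free f = [::].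

Definition models3 (V : finType) (E : rel V) (f : formula) (a0 a1 a2 : V) : Prop :=
  sem E f (fun i => nth a0 [:: a0; a1; a2] i) (fun _ _ => False).

From Stdlib Require Import Relations Classical ClassicalEpsilon.
From mathcomp Require Import all_boot.
Set Implicit Arguments. Unset Strict Implicit. Unset Printing Implicit Defensive.

(* The pair (lhd1 w, lhd2 w) is the least pair of transitive relations that
   contains the pairs (w, v), v <> w, and is closed under E.  For symmetric E,
   lhd2 w is lhd1 w reversed on the edges, so lhd1 w alone is the least
   relation closed under the positive first-order operator [lhd_step]; hence
   it is the inflationary fixed point of that operator.  If w is the least
   vertex of the first order of a realizer, the realizer is itself such a pair
   of relations, so lhd1 w is contained in a strict order and is irreflexive.
   On a prime graph lhd1 w is total: otherwise the vertices reachable from two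
   incomparable vertices through incomparable pairs form a module with at
   least two elements that misses w. *)

Definition edge_flip (V : finType) (E : rel V) (R : V -> V -> Prop) (a b : V) : Prop :=
  (E a b /\ R b a) \/ (~ E a b /\ R a b).

Definition lhd_step (V : finType) (E : rel V) (w : V) (R : V -> V -> Prop) (a b : V)
    : Prop :=
  (a = w /\ b <> w) \/ (exists c, R a c /\ R c b) \/
  (~ E a b /\ exists c, edge_flip E R a c /\ edge_flip E R c b) \/
  (E a b /\ exists c, edge_flip E R b c /\ edge_flip E R c a).

(* Variable 0 is w and the pair (1, 2) is (v, v'); the fixed point binds
   relation variable 0 to the pairs (3, 4), and 5 is the witness c. *)
Definition rel_atom (p q : nat) : formula := FRel 0 [:: p; q].

Definition edge_flip_formula (p q : nat) : formula :=
  FOr (FAnd (FEdge p q) (rel_atom q p)) (FAnd (FNot (FEdge p q)) (rel_atom p q)).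

Definition lhd_step_formula : formula :=
  FOr (FAnd (FEq 3 0) (FNot (FEq 4 0)))
  (FOr (FExists 5 (FAnd (rel_atom 3 5) (rel_atom 5 4)))
  (FOr (FAnd (FNot (FEdge 3 4))
             (FExists 5 (FAnd (edge_flip_formula 3 5) (edge_flip_formula 5 4))))
       (FAnd (FEdge 3 4)
             (FExists 5 (FAnd (edge_flip_formula 4 5) (edge_flip_formula 5 3)))))).

Definition lhd_formula : formula := FIfp 0 [:: 3; 4] lhd_step_formula [:: 1; 2].

Lemma lhd_formula_xyy' : formula_xyy' lhd_formula.
Proof. by []. Qed.

(* A [fix] under the parameter [F] rather than a [Fixpoint], so that it is
   convertible with the stages built inside [sem]. *)
Definition ifp_stage (T : Type) (F : (seq T -> Prop) -> seq T -> Prop)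
    : nat -> seq T -> Prop :=
  fix stage n :=
    match n with
    | 0 => fun _ => False
    | m.+1 => fun t => stage m t \/ F (stage m) t
    end.

Lemma sem_FIfp (V : finType) (E : rel V) r xs g ts va ra :
  sem E (FIfp r xs g ts) va ra <->
  exists n, ifp_stage (fun P t => size t = size xs /\
                         sem E g (upd_list va xs t) (upd_rel ra r P)) n (map va ts).
Proof. exact: iff_refl. Qed.

Section LhdStep.

Variables (V : finType) (E : rel V) (w : V).

Lemma edge_flip_mono (R S : V -> V -> Prop) a b :
  (forall x y, R x y -> S x y) -> edge_flip E R a b -> edge_flip E S a b.
Proof. by move=> RS [[e /RS]|[e /RS]]; [left|right]. Qed.

Lemma lhd_step_mono (R S : V -> V -> Prop) a b :
  (forall x y, R x y -> S x y) -> lhd_step E w R a b -> lhd_step E w S a b.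
Proof.
move=> RS [h|[[c [h1 h2]]|[[e [c [h1 h2]]]|[e [c [h1 h2]]]]]].
- by left.
- by right; left; exists c; split; apply: RS.
- by right; right; left; split=> //; exists c; split; apply: edge_flip_mono RS _.
- by right; right; right; split=> //; exists c; split; apply: edge_flip_mono RS _.
Qed.

Lemma lhd_step_chain (P : nat -> V -> V -> Prop) a b :
  (forall n m x y, n <= m -> P n x y -> P m x y) ->
  lhd_step E w (fun x y => exists n, P n x y) a b -> exists n, lhd_step E w (P n) a b.
Proof.
move=> mono.
have flip_chain x y : edge_flip E (fun x y => exists n, P n x y) x y ->
    exists n, edge_flip E (P n) x y.
  by move=> [[e [n h]]|[e [n h]]]; exists n; [left|right].
have upl n1 n2 x y : P n1 x y -> P (maxn n1 n2) x y := mono _ _ x y (leq_maxl n1 n2).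
have upr n1 n2 x y : P n2 x y -> P (maxn n1 n2) x y := mono _ _ x y (leq_maxr n1 n2).
move=> [h|[[c [[n1 h1] [n2 h2]]]|[[e [c [/flip_chain[n1 h1] /flip_chain[n2 h2]]]]|
          [e [c [/flip_chain[n1 h1] /flip_chain[n2 h2]]]]]]].
- by exists 0; left.
- by exists (maxn n1 n2); right; left; exists c; split; [apply: upl | apply: upr].
- exists (maxn n1 n2); right; right; left; split=> //; exists c.
  by split; [apply: edge_flip_mono (upl _ _) h1 | apply: edge_flip_mono (upr _ _) h2].
- exists (maxn n1 n2); right; right; right; split=> //; exists c.
  by split; [apply: edge_flip_mono (upl _ _) h1 | apply: edge_flip_mono (upr _ _) h2].
Qed.

Fixpoint lhd_stage (n : nat) : V -> V -> Prop :=
  match n with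
  | 0 => fun _ _ => False
  | m.+1 => fun a b => lhd_stage m a b \/ lhd_step E w (lhd_stage m) a b
  end.

Definition lhd_step_closed (R : V -> V -> Prop) : Prop :=
  forall a b, lhd_step E w R a b -> R a b.

Lemma lhd_stage_mono n m a b : n <= m -> lhd_stage n a b -> lhd_stage m a b.
Proof.
elim: m => [|m IH]; first by rewrite leqn0 => /eqP ->.
by rewrite leq_eqVlt => /orP [/eqP -> //|/IH h /h]; left.
Qed.

Lemma lhd_stage_closed : lhd_step_closed (fun a b => exists n, lhd_stage n a b).
Proof.
move=> a b /lhd_step_chain [n1 n2 x y|n h]; first exact: lhd_stage_mono.
by exists n.+1; right.
Qed.

Lemma lhd_stage_min (R : V -> V -> Prop) n a b :
  lhd_step_closed R -> lhd_stage n a b -> R a b.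
Proof.
move=> clR; elim: n a b => [//|n IH] a b [h|h]; first exact: IH.
by apply: clR; apply: lhd_step_mono h.
Qed.

Lemma models3_lhd_formula_stage a b :
  models3 E lhd_formula w a b <-> exists n, lhd_stage n a b.
Proof.
rewrite /models3 sem_FIfp /=.
set F := (X in ifp_stage X).
suff stageE n c d : ifp_stage F n [:: c; d] <-> lhd_stage n c d.
  by split=> -[n /stageE h]; exists n.
elim: n c d => [|n IH] c d; first by split.
have stepE : F (ifp_stage F n) [:: c; d] <-> lhd_step E w (lhd_stage n) c d.
  change (2 = 2 /\ lhd_step E w (fun x y => ifp_stage F n [:: x; y]) c d <->
          lhd_step E w (lhd_stage n) c d).
  by split=> [[_ h]|h]; [|split=> //]; apply: lhd_step_mono h => x y /IH.
by have := IH c d; rewrite /=; tauto.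
Qed.

End LhdStep.

Definition relpair_sub (V : Type) (p q : relpair V) : Prop :=
  (forall a b, p.1 a b -> q.1 a b) /\ (forall a b, p.2 a b -> q.2 a b).

Lemma closE_comp_mono (V : finType) (E : rel V) (li lo li' lo' : V -> V -> Prop) a b :
  (forall x y, li x y -> li' x y) -> (forall x y, lo x y -> lo' x y) ->
  closE_comp E li lo a b -> closE_comp E li' lo' a b.
Proof.
move=> hi ho [h|[[h e]|[h e]]]; [left; exact: hi|right; left|right; right].
  by split; first exact: ho.
by split; first exact: ho.
Qed.

Lemma clos_trans_min (T : Type) (R A : T -> T -> Prop) a b :
  (forall x y z, A x y -> A y z -> A x z) -> (forall x y, R x y -> A x y) ->
  clos_trans T R a b -> A a b.
Proof. by move=> trA RA; elim=> [x y /RA //|x y z _ + _]; apply: trA. Qed.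

Lemma realizer_sym (V : finType) (E : rel V) (A B : V -> V -> Prop) :
  realizer E A B -> realizer E B A.
Proof. by move=> [hA [hB h]]; do 2!split=> //; move=> u v /h; tauto. Qed.

Lemma realizer_closE (V : finType) (E : rel V) (A B : V -> V -> Prop) a b :
  realizer E A B -> closE_comp E A B a b -> A a b.
Proof.
move=> [[_ [_ totA]] [[irrB [trB _]] hE]] [//|[[Bba e]|[Bab ne]]].
- have ba : b <> a by move=> eq; subst; exact: irrB Bba.
  by case/(hE b a ba): e => [[_ Bab]|[]] //; case: (irrB a); apply: trB Bab Bba.
- have ab : a <> b by move=> eq; subst; exact: irrB Bab.
  by case: (totA a b ab) => // Aba; case/negP: ne; apply/(hE a b ab); right.
Qed.

Section Lhd.

Variables (V : finType) (E : rel V) (w : V).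

Definition lhd2 (a b : V) : Prop := exists k, (lhd_k E w k).2 a b.

Lemma lhd_k_mono k m : k <= m -> relpair_sub (lhd_k E w k) (lhd_k E w m).
Proof.
elim: m => [|m IH]; first by rewrite leqn0 => /eqP ->.
rewrite leq_eqVlt => /orP [/eqP -> //|]; rewrite ltnS => /IH [h1 h2].
by split=> a b h; apply: t_step; left; [exact: h1 | exact: h2].
Qed.

Lemma lhd_k_min (A B : V -> V -> Prop) :
  (forall x y z, A x y -> A y z -> A x z) -> (forall x y z, B x y -> B y z -> B x z) ->
  (forall v, v <> w -> A w v) ->
  (forall a b, closE_comp E A B a b -> A a b) ->
  (forall a b, closE_comp E B A a b -> B a b) ->
  forall k, relpair_sub (lhd_k E w k) (A, B).
Proof.
move=> trA trB Aw clA clB; elim=> [|k [IH1 IH2]].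
  by split=> // a b [-> /Aw].
split=> a b /= h; apply: clos_trans_min h => // x y /closE_comp_mono h;
  [apply: clA | apply: clB]; exact: h.
Qed.

Lemma lhd1_trans a b c : lhd1 E w a b -> lhd1 E w b c -> lhd1 E w a c.
Proof.
move=> [k1 h1] [k2 h2]; exists (maxn k1 k2).+1.
apply: (t_trans _ _ _ b); apply: t_step; left.
  exact: (proj1 (lhd_k_mono (leq_maxl k1 k2))).
exact: (proj1 (lhd_k_mono (leq_maxr k1 k2))).
Qed.

Lemma lhd2_trans a b c : lhd2 a b -> lhd2 b c -> lhd2 a c.
Proof.
move=> [k1 h1] [k2 h2]; exists (maxn k1 k2).+1.
apply: (t_trans _ _ _ b); apply: t_step; left.
  exact: (proj2 (lhd_k_mono (leq_maxl k1 k2))).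
exact: (proj2 (lhd_k_mono (leq_maxr k1 k2))).
Qed.

Lemma lhd1_start v : v <> w -> lhd1 E w w v.
Proof. by exists 0. Qed.

Hypothesis Esym : forall u v, E u v = E v u.

Lemma lhd2_flip a b : lhd2 a b <-> edge_flip E (lhd1 E w) a b.
Proof.
split=> [[k h]|[[e [k h]]|[/negP e [k h]]]].
- have [e|e] := boolP (E a b).
    by left; split=> //; exists k.+1; apply: t_step; right; left.
  by right; split; [apply/negP | exists k.+1; apply: t_step; right; right].
- by exists k.+1; apply: t_step; right; left; rewrite Esym.
- by exists k.+1; apply: t_step; right; right.
Qed.

Lemma lhd1_closed : lhd_step_closed E w (lhd1 E w).
Proof.
have lhd2_comp a b c : edge_flip E (lhd1 E w) a c -> edge_flip E (lhd1 E w) c b ->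
    edge_flip E (lhd1 E w) a b.
  by move=> /lhd2_flip h1 /lhd2_flip h2; apply/lhd2_flip; apply: lhd2_trans h1 h2.
move=> a b [[-> /lhd1_start //]|[[c [h1 h2]]|[[e [c [h1 h2]]]|[e [c [h1 h2]]]]]].
- exact: lhd1_trans h1 h2.
- by case: (lhd2_comp _ _ _ h1 h2) => [[/e]|[]].
- by case: (lhd2_comp _ _ _ h1 h2) => [[]|[[]]] //; rewrite Esym.
Qed.

Lemma lhd1_min (R : V -> V -> Prop) a b :
  lhd_step_closed E w R -> lhd1 E w a b -> R a b.
Proof.
move=> clR [k]; apply: (proj1 (lhd_k_min (B := edge_flip E R) _ _ _ _ _ k)).
- by move=> x y z Rxy Ryz; apply: clR; right; left; exists y.
- move=> x y z Fxy Fyz; have [e|/negP e] := boolP (E x z).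
    left; split=> //; apply: clR; right; right; right.
    by rewrite Esym; split=> //; exists y.
  by right; split=> //; apply: clR; right; right; left; split=> //; exists y.
- by move=> v vw; apply: clR; left.
- move=> x y [//|[[[[_ //]|[ne _]] e]|[[[e' _]|[_ //]] ne]]].
    by case: ne.
  by rewrite e' in ne.
- move=> x y [//|[[h e]|[h ne]]].
    by left; split; rewrite // Esym.
  by right; split=> //; apply/negP.
Qed.

Lemma models3_lhd_formula a b : models3 E lhd_formula w a b <-> lhd1 E w a b.
Proof.
rewrite models3_lhd_formula_stage; split=> [[n]|].
  exact: lhd_stage_min lhd1_closed.
exact: lhd1_min (@lhd_stage_closed V E w).
Qed.

Lemma lhd1_sub_realizer (A B : V -> V -> Prop) a b :
  realizer E A B -> (forall v, v <> w -> A w v) -> lhd1 E w a b -> A a b.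
Proof.
move=> real Aw [k]; apply: (proj1 (lhd_k_min _ _ Aw _ _ k)).
- exact: (proj1 (proj2 (proj1 real))).
- exact: (proj1 (proj2 (proj1 (proj2 real)))).
- by move=> x y; apply: realizer_closE.
- by move=> x y; apply: realizer_closE (realizer_sym real).
Qed.

Definition lhd_comparable (u v : V) : Prop := lhd1 E w u v \/ lhd1 E w v u.

Lemma lhd_incomparable_edge a b x :
  ~ lhd_comparable a b -> lhd_comparable x a -> lhd_comparable x b -> E x a -> E x b.
Proof.
move=> nab xa xb exa; apply: contraT => /negP nexb; exfalso.
have nlhd2 u v : ~ lhd_comparable u v -> ~ lhd2 u v.
  by move=> nuv /lhd2_flip [[_ h]|[_ h]]; apply: nuv; [right|left].
have nba : ~ lhd_comparable b a by move=> [h|h]; apply: nab; [right|left].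
case: xa => [xa|ax]; case: xb => [xb|bx].
- apply: (nlhd2 a b nab); apply: (@lhd2_trans a x b); apply/lhd2_flip.
    by left; split; rewrite // Esym.
  by right.
- by apply: nab; right; apply: lhd1_trans bx xa.
- by apply: nab; left; apply: lhd1_trans ax xb.
- apply: (nlhd2 b a nba); apply: (@lhd2_trans b x a); apply/lhd2_flip.
    by right; split; rewrite // Esym.
  by left.
Qed.

Lemma lhd_incomparable_edge_eq a b x :
  ~ lhd_comparable a b -> lhd_comparable x a -> lhd_comparable x b -> E x a = E x b.
Proof.
move=> nab xa xb.
have nba : ~ lhd_comparable b a by move=> [h|h]; apply: nab; [right|left].
by apply/idP/idP; apply: lhd_incomparable_edge.
Qed.

Definition lhd_incomparable (u v : V) : Prop := u <> v /\ ~ lhd_comparable u v.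

Lemma lhd_incomparable_sym u v : lhd_incomparable u v -> lhd_incomparable v u.
Proof.
move=> [uv nuv]; split=> [vu|[h|h]].
- exact: uv (esym vu).
- exact: nuv (or_intror h).
- exact: nuv (or_introl h).
Qed.

Lemma lhd_incomparable_neq_w u v : lhd_incomparable u v -> v <> w.
Proof.
by move=> [uv nuv] vw; apply: nuv; right; rewrite vw; apply: lhd1_start; rewrite -vw.
Qed.

Definition lhd_incomparable_class (a : V) : {set V} :=
  [set y | excluded_middle_informative (clos_refl_trans V lhd_incomparable a y)].

Lemma lhd_incomparable_classP a y :
  reflect (clos_refl_trans V lhd_incomparable a y) (y \in lhd_incomparable_class a).
Proof. by rewrite inE; exact: sumboolP. Qed.

Lemma lhd_incomparable_class_comparable a x m :
  x \notin lhd_incomparable_class a -> m \in lhd_incomparable_class a ->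
  lhd_comparable x m.
Proof.
move=> xC mC; apply: NNPP => nxm.
have xm : x <> m by move=> xm; rewrite xm mC in xC.
move/negP: xC; apply; apply/lhd_incomparable_classP; apply: (rt_trans _ _ _ m).
  exact/lhd_incomparable_classP.
by apply: rt_step; apply: lhd_incomparable_sym.
Qed.

Lemma lhd_incomparable_class_module a : is_module E (lhd_incomparable_class a).
Proof.
set C := lhd_incomparable_class a.
have aC : a \in C by apply/lhd_incomparable_classP; apply: rt_refl.
have edge_const x m : x \notin C -> m \in C -> E x m = E x a.
  move=> xC /lhd_incomparable_classP /(clos_rt_rtn1 _ _ _ _); elim=> // y z yz ay IH.
  have yC : y \in C by apply/lhd_incomparable_classP; exact: clos_rtn1_rt ay.
  have zC : z \in C.
    apply/lhd_incomparable_classP; apply: clos_rtn1_rt.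
    exact: Relation_Operators.rtn1_trans yz ay.
  rewrite -IH; apply: esym; apply: lhd_incomparable_edge_eq (proj2 yz) _ _.
    exact: lhd_incomparable_class_comparable xC yC.
  exact: lhd_incomparable_class_comparable xC zC.
split; first by apply/set0Pn; exists a.
move=> x xC; have [exa|nexa] := boolP (E x a); [left|right] => m mC;
  by rewrite edge_const.
Qed.

Lemma lhd_incomparable_class_notin_w a b :
  lhd_incomparable a b -> w \notin lhd_incomparable_class a.
Proof.
move=> iab; apply/negP => /lhd_incomparable_classP /(clos_rt_rtn1 _ _ _ _).
suff nw y : clos_refl_trans_n1 V lhd_incomparable a y -> y <> w by move/nw; apply.
case=> [|z y' /lhd_incomparable_neq_w yw _ //].
exact: lhd_incomparable_neq_w (lhd_incomparable_sym iab).
Qed.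

Lemma lhd1_total : prime_graph E -> forall a b, a <> b -> lhd_comparable a b.
Proof.
move=> pr a b ab; apply: NNPP => nab.
have iab : lhd_incomparable a b by [].
have [CT|/eqP/cards1P [c Cc]] := pr _ (lhd_incomparable_class_module a).
  by move: (lhd_incomparable_class_notin_w iab); rewrite CT inE.
have aC : a \in lhd_incomparable_class a by apply/lhd_incomparable_classP; apply: rt_refl.
have bC : b \in lhd_incomparable_class a by apply/lhd_incomparable_classP; apply: rt_step.
by apply: ab; move: aC bC; rewrite Cc !inE => /eqP -> /eqP ->.
Qed.

Lemma lhd1_strict_linear_order (A B : V -> V -> Prop) :
  prime_graph E -> realizer E A B -> (forall v, v <> w -> A w v) ->
  strict_linear_order (lhd1 E w).
Proof.
move=> pr real Aw; split; [|split].
- by move=> v /(lhd1_sub_realizer real Aw); apply: (proj1 (proj1 real)).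
- exact: lhd1_trans.
- exact: lhd1_total pr.
Qed.

End Lhd.

Lemma strict_linear_order_has_min (T : finType) (lt : T -> T -> Prop) (t0 : T) :
  strict_linear_order lt -> exists m, forall x, x <> m -> lt m x.
Proof.
move=> [_ [tr tot]].
have [m hm] : exists m, forall x, x \in enum T -> x = m \/ lt m x.
  elim: (enum T) => [|x s [m hm]]; first by exists t0.
  case: (eqVneq x m) => [->|/eqP xm].
    by exists m => z; rewrite inE => /predU1P [->|/hm]; [left|].
  case: (tot x m xm) => [xltm|mltx].
    exists x => z; rewrite inE => /predU1P [->|/hm [->|mz]]; [by left|by right|].
    by right; apply: tr xltm mz.
  by exists m => z; rewrite inE => /predU1P [->|/hm]; [right|].
by exists m => x xm; case: (hm x (mem_enum T x)).
Qed.

Lemma linear_order_of_strict (T : Type) (lt le : T -> T -> Prop) :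
  strict_linear_order lt -> (forall x y, le x y <-> lt x y \/ x = y) -> linear_order le.
Proof.
move=> [irr [tr tot]] leE; split; [|split; [|split]].
- by move=> x; apply/leE; right.
- move=> x y /leE [xy|//] /leE [yx|//].
  by case: (irr x); apply: tr xy yx.
- move=> x y z /leE [xy|->] /leE [yz|<-]; apply/leE; try by [left | right].
  by left; apply: tr xy yz.
- move=> x y; case: (classic (x = y)) => [->|/tot [xy|yx]].
  + by left; apply/leE; right.
  + by left; apply/leE; left.
  + by right; apply/leE; left.
Qed.

Theorem corollary5p8 :
  (exists phi1 : formula,
     formula_xyy' phi1 /\
     forall (V : finType) (E : rel V),
       simple_graph E -> prime_graph E -> permutation_graph E ->
       forall w v v' : V, models3 E phi1 w v v' <-> lhd1 E w v v')
  /\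
  (forall phi1 : formula,
     formula_xyy' phi1 ->
     (forall (V : finType) (E : rel V),
        simple_graph E -> prime_graph E -> permutation_graph E ->
        forall w v v' : V, models3 E phi1 w v v' <-> lhd1 E w v v') ->
     forall (V : finType) (E : rel V),
       simple_graph E -> prime_graph E -> permutation_graph E ->
       exists w : V, linear_order (fun v v' => models3 E (FOr phi1 (FEq 1 2)) w v v')).
Proof.
split.
  exists lhd_formula; split=> [|V E [_ [Esym _]] _ _ w v v'].
    exact: lhd_formula_xyy'.
  exact: models3_lhd_formula.
move=> phi _ phiE V E sg pr pg.
have [[v0 _] [Esym _]] := sg; have [lt1 [lt2 real]] := pg.
have [w wmin] := strict_linear_order_has_min v0 (proj1 real).
exists w; apply: (linear_order_of_strict (lhd1_strict_linear_order Esym pr real wmin)).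
move=> v v'; have := phiE V E sg pr pg w v v'.
by rewrite /models3 /=; tauto.
Qed.
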